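(* Under Strategy 1 (described in the context), the expected number of uncles created during an attack cycle and eventually referred is $$\mathbb{E}[U]=q+\frac{q^3\gamma}{p-q}-\frac{p^3}{p-q}\Bigl(\frac qp\Bigr)^{n_1+1}\gamma-q^{n_1+1}(1-\gamma).$$
   Context: Honest hashrate $p$, attacker hashrate $q$, $p+q=1$, $0<q<p$; $\gamma\in[0,1]$ is the fraction of honest hashrate mining on the attacker's block during a public competition between equal-height blocks. Each new block is the attacker's with probability $q$, independently. Attack cycles are i.i.d. words in S (attacker block) and H (honest block): H, SHS, SHH, or SSwH with $w$ a Dyck word; $\mathbb{P}[H]=p$, $\mathbb{P}[SHS]=pq^2$, $\mathbb{P}[SHH]=p^2q$, $\mathbb{P}[SSwH]=q^2p(pq)^{|w|}$. Ethereum rules: an uncle is a non-official block whose parent is official; a nephew (official block) may refer an uncle at distance (height difference) at most $n_1$ ($n_1\ge2$ an integer). Strategy 1: the attacker withholds his blocks, and each time the honest miners publish a block he publishes the part of his secret fork of the same height as the public honest chain (creating a competition, in which a fraction $\gamma$ of honest hashrate mines on the attacker's branch); the attacker's fork wins in cycles starting with SS; all miners refer all possible uncles. $U(\omega)$ is the number of uncles created during cycle $\omega$ that are referred by nephews in $\omega$ or in a later cycle. *)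

From HB Require Import structures.
From mathcomp Require Import all_boot all_order all_algebra.
From mathcomp Require Import all_classical all_reals all_analysis.
Set Implicit Arguments. Unset Strict Implicit. Unset Printing Implicit Defensive.
Import Order.TTheory GRing.Theory Num.Theory.

(* Attack cycles are words over bool: true = S (attacker block),       *)
(* false = H (honest block), listed in mining order.                   *)

Definition dyck (w : seq bool) : bool :=
  [forall i : 'I_(size w).+1, count negb (take i w) <= count id (take i w)]
  && (count id w == count negb w).

(* Blocks of a cycle are stored in mining order:
   the block at index i of the list is the i-th mined block of the cycle.
   - att  : mined by the attacker;
   - ht   : height above the last official block before the cycle;
   - par  : index of the parent block in the cycle, or None when the parent
            is the (official) last block before the cycle;
   - off  : the block is official (belongs to the final official chain);
   - pub  : index of the block of the cycle whose mining triggers the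
            publication of this block (it is public for every block mined
            at a strictly later index). *)
Record block := Block { att : bool; ht : nat; par : option nat; off : bool; pub : nat }.

Definition block0 := Block false 0 None false 0.

Definition nS_before (x : seq bool) (i : nat) := count id (take i x).
Definition nH_before (x : seq bool) (i : nat) := count negb (take i x).
(* position of the t-th (1-based) attacker / honest block of x *)
Definition posS (x : seq bool) (t : nat) :=
  nth 0 [seq i <- iota 0 (size x) | nth false x i] t.-1.
Definition posH (x : seq bool) (k : nat) :=
  nth 0 [seq i <- iota 0 (size x) | ~~ nth false x i] k.-1.

(* Strategy 1, cycles won by the attacker (SHS and SS w H).
   c : choices for honest blocks (c`_k for the (k+1)-th honest block):
   true = mined on the attacker's published branch (fraction gamma),
   false = mined on the honest branch (fraction 1 - gamma).
   The attacker's secret chain has heights 1,2,...; its block of height t is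
   published when the honest public chain reaches height t (t-th honest block),
   or at the end of the cycle.  The k-th honest block has height k; its parent
   is the last official block before the cycle if k = 1, otherwise the
   attacker's published block of height k-1 or the (k-1)-th honest block. *)
Definition attacker_wins_block (x c : seq bool) (i : nat) : block :=
  let s := nS_before x i in
  let k := nH_before x i in
  if nth false x i then
    Block true s.+1 (if s == 0 then None else Some (posS x s)) true
          (maxn i (posH x (minn s.+1 (count negb x))))
  else
    Block false k.+1
          (if k == 0 then None
           else if nth false c k then Some (posS x k) else Some (posH x k))
          false i.

Definition cycle_blocks (x c : seq bool) : seq block :=
  if x == [:: false] then [:: Block false 1 None true 0]
  else if x == [:: true; false; false] then
    let g := nth false c 1 in
    (* S1 published when H1 is mined; H2 mined on S1 (g) or on H1 *)
    [:: Block true 1 None g 1; Block false 1 None (~~ g) 1;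
        Block false 2 (Some (if g then 0 else 1)) true 2]
  else [seq attacker_wins_block x c i | i <- iota 0 (size x)].

Definition is_uncle (bs : seq block) (i : nat) : bool :=
  let b := nth block0 bs i in
  ~~ off b && (match par b with None => true | Some j => off (nth block0 bs j) end).

Definition tip (bs : seq block) : nat := \max_(b <- bs | off b) ht b.

(* An uncle u is referred if some official block mined after u was published
   has height in (ht u, ht u + n1] (nephew in the cycle), or if the first
   official block after the cycle (height tip+1, mined in a later cycle, after
   u is public) is at distance at most n1. *)
Definition referred (n1 : nat) (bs : seq block) (i : nat) : bool :=
  let u := nth block0 bs i in
  has (fun j => let b := nth block0 bs j in
                [&& off b, pub u < j, ht u < ht b & ht b <= ht u + n1])
      (iota 0 (size bs))
  || (tip bs < ht u + n1).

Definition Uc (n1 : nat) (bs : seq block) : nat :=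
  count (fun i => is_uncle bs i && referred n1 bs i) (iota 0 (size bs)).

Local Open Scope ring_scope.

Definition Ecyc {R : realType} (gamma : R) (n1 : nat) (x : seq bool) : R :=
  \sum_(c : (count negb x).-tuple bool)
     (\prod_(b <- c) (if b then gamma else 1 - gamma))
     * (Uc n1 (cycle_blocks x c))%:R.

(* partial expectation of U: cycles H, SHS, SHH, and SS w H with |w| < N,
   where |w| is the number of H in w (w of length 2|w|). *)
Definition EU_partial {R : realType} (p q gamma : R) (n1 : nat) (N : nat) : R :=
  p * Ecyc gamma n1 [:: false]
  + p * q ^+ 2 * Ecyc gamma n1 [:: true; false; true]
  + p ^+ 2 * q * Ecyc gamma n1 [:: true; false; false]
  + \sum_(n < N) \sum_(w : (2 * n).-tuple bool | dyck w)
        q ^+ 2 * p * (p * q) ^+ n * Ecyc gamma n1 (true :: true :: rcons w false).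

From HB Require Import structures.
From mathcomp Require Import all_boot all_order all_algebra.
From mathcomp Require Import all_classical all_reals all_analysis.
From mathcomp Require Import zify ring lra.
Import Order.TTheory GRing.Theory Num.Theory numFieldNormedType.Exports.

(* Only the cycles won by the attacker create uncles that get referred: SHS and
   SHH one each, and in a cycle SS w H the honest block mined when the cycle
   holds s attacker and k honest blocks is a referred uncle with probability
   [uncle_prob s k]: its parent is official iff k = 0 or it was mined on the
   attacker's branch, and it is referred iff s - k <= n1.  So the SS w H cycles
   contribute q^2 times the expected sum of [uncle_prob] along the walk of the
   lead s - k, started at 2 and stopped when it first reaches 1.  The truncated
   expectations satisfy a linear recursion whose bounded solution
   [limit_uncles] is explicit, and they converge to it geometrically: with
   lam = 1/(2q) the weight lam^(s-k) shrinks by the factor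
   q lam + p / lam = 1/2 + 2pq < 1 at each step of the walk. *)

Lemma count_take_leq (T : Type) (a : pred T) (s : seq T) i :
  count a (take i s) <= count a s.
Proof. by rewrite -{2}(cat_take_drop i s) count_cat leq_addr. Qed.

Lemma count_id_negb (x : seq bool) : count id x + count negb x = size x.
Proof. exact: count_predC. Qed.

Lemma nS_beforeS x i : i < size x ->
  nS_before x i.+1 = nS_before x i + nth false x i.
Proof. by move=> ltix; rewrite /nS_before (take_nth false ltix) -cats1 count_cat /= addn0. Qed.

Lemma nH_beforeS x i : i < size x ->
  nH_before x i.+1 = nH_before x i + ~~ nth false x i.
Proof. by move=> ltix; rewrite /nH_before (take_nth false ltix) -cats1 count_cat /= addn0. Qed.

Lemma nS_before_cons b x i : nS_before (b :: x) i.+1 = b + nS_before x i.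
Proof. by []. Qed.

Lemma nH_before_cons b x i : nH_before (b :: x) i.+1 = ~~ b + nH_before x i.
Proof. by []. Qed.

Lemma nS_before_le x i : nS_before x i <= count id x.
Proof. exact: count_take_leq. Qed.

Lemma nH_before_le x i : nH_before x i <= count negb x.
Proof. exact: count_take_leq. Qed.

Lemma nS_before_mono x : {homo nS_before x : i j / i <= j}.
Proof. by move=> i j leij; rewrite /nS_before -(take_takel x leij) count_take_leq. Qed.

Lemma nS_before_hit x a b t : b <= size x ->
  nS_before x a <= t < nS_before x b ->
  exists2 j, a <= j < b & nth false x j && (nS_before x j == t).
Proof.
elim: b => [|b IHb] lebx /andP[leat]; first by rewrite /nS_before take0.
case: (ltnP t (nS_before x b)) => [lttb _ | lebt].
  have [j /andP[leaj ltjb] xj] := IHb (ltnW lebx) (introT andP (conj leat lttb)).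
  by exists j => //; rewrite leaj ltnS ltnW.
rewrite nS_beforeS //; case xb: (nth false x b) => ltt; last first.
  by move: ltt; rewrite addn0 ltnNge lebt.
have leab : a <= b.
  rewrite leqNgt; apply/negP => ltba.
  by move: (nS_before_mono x _ _ ltba); rewrite nS_beforeS // xb; lia.
by exists b; rewrite ?leab ?ltnSn //=; apply/eqP; lia.
Qed.

Lemma nth_filter_iota (a : pred bool) x t : t < count a x ->
  nth 0 [seq i <- iota 0 (size x) | a (nth false x i)] t < size x /\
  a (nth false x (nth 0 [seq i <- iota 0 (size x) | a (nth false x i)] t)).
Proof.
move=> ltt; set l := seq.filter _ _.
have size_l : size l = count a x.
  by rewrite size_filter -[in RHS](mkseq_nth false x) /mkseq count_map.
have : nth 0 l t \in l by rewrite mem_nth // size_l.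
by rewrite mem_filter mem_iota /= add0n => /andP[-> ->].
Qed.

Lemma posS_attacker x t : 0 < t <= count id x ->
  posS x t < size x /\ nth false x (posS x t).
Proof. by case: t => // t /andP[_]; exact: (nth_filter_iota id). Qed.

Lemma posH_honest x t : 0 < t <= count negb x ->
  posH x t < size x /\ ~~ nth false x (posH x t).
Proof. by case: t => // t /andP[_]; exact: (nth_filter_iota negb). Qed.

Section AttackerWinsCycle.
Variables (x c : seq bool) (n1 : nat).
Hypothesis x_neq_H : x != [:: false].
Hypothesis x_neq_SHH : x != [:: true; false; false].
Hypothesis attacker_ahead :
  forall i, i < size x -> ~~ nth false x i -> nH_before x i < nS_before x i.

Let bs := cycle_blocks x c.

Lemma cycle_blocksE : bs = [seq attacker_wins_block x c i | i <- iota 0 (size x)].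
Proof. by rewrite /bs /cycle_blocks (negbTE x_neq_H) (negbTE x_neq_SHH). Qed.

Lemma size_cycle_blocks : size bs = size x.
Proof. by rewrite cycle_blocksE size_map size_iota. Qed.

Lemma nth_cycle_blocks j : j < size x -> nth block0 bs j = attacker_wins_block x c j.
Proof. by move=> ltjx; rewrite cycle_blocksE (nth_map 0) ?size_iota // nth_iota. Qed.

Lemma off_cycle_blocks j : j < size x -> off (nth block0 bs j) = nth false x j.
Proof.
by move=> ltjx; rewrite nth_cycle_blocks // /attacker_wins_block; case: (nth false x j).
Qed.

Lemma ht_cycle_blocks j : j < size x -> nth false x j ->
  ht (nth block0 bs j) = (nS_before x j).+1.
Proof. by move=> ltjx xj; rewrite nth_cycle_blocks // /attacker_wins_block xj. Qed.

Lemma tip_cycle_blocks : tip bs = count id x.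
Proof.
rewrite /tip cycle_blocksE big_map.
rewrite (eq_bigl (fun j => nth false x j)); last first.
  by move=> j; rewrite /attacker_wins_block; case: (nth false x j).
rewrite (eq_bigr (fun j => (nS_before x j).+1)); last first.
  by move=> j xj; rewrite /attacker_wins_block xj.
apply/eqP; rewrite eqn_leq; apply/andP; split.
  apply/bigmax_leqP_seq => j; rewrite mem_iota add0n => /andP[_ ltjx] xj.
  by have := nS_before_le x j.+1; rewrite nS_beforeS // xj addn1.
case: (posnP (count id x)) => [-> // | cnt_gt0].
have [|j /andP[_ ltjx] /andP[xj /eqP sj]] := @nS_before_hit x 0 (size x) (count id x).-1 (leqnn _).
  by rewrite /nS_before take0 take_size /= ltn_predL.
apply: leq_trans (leq_bigmax_seq j _ xj); first by rewrite sj prednK.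
by rewrite mem_iota add0n.
Qed.

Lemma parent_official i : i < size x -> ~~ nth false x i ->
  (if par (nth block0 bs i) is Some j then off (nth block0 bs j) else true) =
  (nH_before x i == 0) || nth false c (nH_before x i).
Proof.
move=> ltix xi; rewrite nth_cycle_blocks // /attacker_wins_block /= (negbTE xi) /=.
set k := nH_before x i.
have ltks : k < nS_before x i by exact: attacker_ahead.
have ltk_negb : k < count negb x.
  by have := nH_before_le x i.+1; rewrite nH_beforeS // xi addn1.
case: (posnP k) => [-> // | k_gt0] /=.
case: (nth false c k).
  have kS : 0 < k <= count id x by rewrite k_gt0 ltnW // (leq_trans ltks) ?nS_before_le.
  have [ltjx xj] := @posS_attacker _ _ kS.
  by rewrite off_cycle_blocks.
have kH : 0 < k <= count negb x by rewrite k_gt0 ltnW.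
have [ltjx xj] := @posH_honest _ _ kH.
by rewrite off_cycle_blocks // (negbTE xj).
Qed.

Lemma referred_honest i : i < size x -> ~~ nth false x i ->
  referred n1 bs i = (nS_before x i <= nH_before x i + n1).
Proof.
move=> ltix xi; rewrite /referred (nth_cycle_blocks _ ltix) /attacker_wins_block (negbTE xi) /=.
rewrite tip_cycle_blocks size_cycle_blocks.
set s := nS_before x i; set k := nH_before x i.
have ltks : k < s by exact: attacker_ahead.
apply/idP/idP.
  case/orP => [/hasP[j] | ]; last by have := nS_before_le x i; rewrite -/s; lia.
  rewrite mem_iota add0n => /andP[_ ltjx] /and4P[offj ltij _].
  rewrite off_cycle_blocks // in offj; rewrite ht_cycle_blocks //.
  by have := nS_before_mono x _ _ (ltnW ltij); rewrite -/s; lia.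
move=> le_s; case: (ltnP s (count id x)) => [lt_s_cnt | le_cnt_s]; last first.
  by apply/orP; right; lia.
have [|j /andP[leij ltjx] /andP[xj /eqP sj]] := @nS_before_hit x i (size x) s (leqnn _).
  by rewrite /nS_before take_size leqnn.
have ltij : i < j.
  by rewrite ltn_neqAle leij andbT; apply/eqP => eij; rewrite eij xj in xi.
apply/orP; left; apply/hasP; exists j; first by rewrite mem_iota add0n.
rewrite off_cycle_blocks // ht_cycle_blocks // xj ltij sj /=.
by apply/andP; split; lia.
Qed.

Lemma uncle_referredE i : i < size x ->
  is_uncle bs i && referred n1 bs i =
  [&& ~~ nth false x i, nS_before x i - nH_before x i <= n1 &
      (nH_before x i == 0) || nth false c (nH_before x i)].
Proof.
move=> ltix; rewrite /is_uncle /= off_cycle_blocks //.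
case xi: (nth false x i) => //=.
by rewrite parent_official ?xi // referred_honest ?xi // leq_subLR addnC andbC.
Qed.

End AttackerWinsCycle.

Fixpoint first_passage (s k : nat) (u : seq bool) : bool :=
  if u is b :: u' then
    (k.+2 <= s) && (if b then first_passage s.+1 k u' else first_passage s k.+1 u')
  else s == k.+1.

Lemma first_passageE s k u : first_passage s k u =
  all (fun j => k + nH_before u j + 2 <= s + nS_before u j) (iota 0 (size u))
  && (s + count id u == k + count negb u + 1).
Proof.
elim: u s k => [|b u IHu] s k /=; first by apply/eqP/eqP; lia.
rewrite -(addn0 1) iotaDl all_map /nH_before /nS_before /= !addn0.
rewrite (eq_all (a2 := fun j => (k + ~~ b) + nH_before u j + 2 <= (s + b) + nS_before u j));
  last by move=> j /=; rewrite add0n !addnA.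
by case: b; rewrite IHu /= ?addn1 ?addn0 -andbA; congr (_ && (_ && _)); apply/eqP/eqP; lia.
Qed.

Lemma take_rcons_leq (T : Type) (s : seq T) z j : j <= size s -> take j (rcons s z) = take j s.
Proof. by move=> lejs; rewrite -cats1 takel_cat. Qed.

Lemma dyckE w : dyck w =
  all (fun j => nH_before w j <= nS_before w j) (iota 0 (size w).+1)
  && (count id w == count negb w).
Proof.
congr andb; apply/forallP/allP => [ok j | ok j]; last by apply: ok; rewrite mem_iota ltn_ord.
by rewrite mem_iota add0n => /andP[_ ltj]; exact: (ok (Ordinal ltj)).
Qed.

Lemma first_passage_rcons w b : first_passage 2 0 (rcons w b) = ~~ b && dyck w.
Proof.
rewrite first_passageE dyckE size_rcons.
rewrite (eq_in_all (a2 := fun j => nH_before w j <= nS_before w j)); last first.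
  move=> j; rewrite mem_iota add0n ltnS => /andP[_ lejw].
  by rewrite /nH_before /nS_before take_rcons_leq //; lia.
set A := all _ (iota 0 (size w).+1).
have last_ok : A -> count negb w <= count id w.
  by move=> /allP/(_ (size w)); rewrite mem_iota ltnSn /nH_before /nS_before take_size; apply.
clearbody A; case: A last_ok => [/(_ isT) le_cnt | _]; last by rewrite !andbF.
by rewrite -!cats1 !count_cat; case: b => /=; apply/eqP/eqP; lia.
Qed.

Fixpoint bool_seqs (m : nat) : seq (seq bool) :=
  if m is m'.+1 then [seq true :: s | s <- bool_seqs m'] ++ [seq false :: s | s <- bool_seqs m']
  else [:: [::]].

Lemma mem_bool_seqs m s : (s \in bool_seqs m) = (size s == m).
Proof.
elim: m s => [|m IHm] [|b s] //=.
  by rewrite mem_cat; apply/orP => -[] /mapP[].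
have cons_inj (b0 : bool) : injective (cons b0) by move=> ? ? [].
have notin b0 L : (b0 :: s \in [seq ~~ b0 :: t | t <- L]) = false.
  by apply/mapP => -[t _ []]; case: b0.
rewrite mem_cat eqSS -IHm; case: b.
  by rewrite (mem_map (cons_inj true)) (notin true) orbF.
by rewrite (mem_map (cons_inj false)) (notin false).
Qed.

Lemma bool_seqs_uniq m : uniq (bool_seqs m).
Proof.
elim: m => [//|m IHm] /=; rewrite cat_uniq !map_inj_uniq ?IHm //=; try by move=> ? ? [].
by rewrite andbT; apply/hasPn => _ /mapP[s _ ->]; apply/mapP => -[].
Qed.

Local Open Scope ring_scope.

Lemma big_bool_seqsS (V : nmodType) m (F : seq bool -> V) :
  \sum_(s <- bool_seqs m.+1) F s = \sum_(s <- bool_seqs m) (F (true :: s) + F (false :: s)).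
Proof. by rewrite /= big_cat !big_map big_split. Qed.

Lemma big_bool_seqs_rcons (V : nmodType) m (F : seq bool -> V) :
  \sum_(s <- bool_seqs m.+1) F s =
  \sum_(s <- bool_seqs m) (F (rcons s true) + F (rcons s false)).
Proof.
elim: m F => [|m IHm] F; first by rewrite big_bool_seqsS /= !big_cons !big_nil.
rewrite big_bool_seqsS (IHm (fun s => F (true :: s) + F (false :: s))) [RHS]big_bool_seqsS.
by apply: eq_bigr => s _ /=; rewrite addrACA.
Qed.

Lemma sum_tuple_bool_seqs (V : nmodType) m (F : seq bool -> V) :
  \sum_(t : m.-tuple bool) F t = \sum_(s <- bool_seqs m) F s.
Proof.
rewrite -(big_image _ _ (fun t : m.-tuple bool => tval t) predT F).
apply/perm_big/uniq_perm; first by rewrite map_inj_uniq ?enum_uniq //; apply: val_inj.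
  exact: bool_seqs_uniq.
move=> s; rewrite mem_bool_seqs; apply/mapP/idP => [[t _ ->] | size_s].
  by rewrite size_tuple.
by exists (Tuple size_s); rewrite ?mem_enum.
Qed.

Lemma natr_count (R : pzSemiRingType) (T : Type) (a : pred T) (r : seq T) :
  (count a r)%:R = \sum_(i <- r) (a i : nat)%:R :> R.
Proof. by elim: r => [|y r IHr]; rewrite ?big_nil ?big_cons //= natrD IHr. Qed.

Section ChoiceAverage.
Context {R : realType} (gamma : R) (n1 : nat).

Definition choice_weight (c : seq bool) : R :=
  \prod_(b <- c) (if b then gamma else 1 - gamma).

Lemma sum_choice_weight m : \sum_(c <- bool_seqs m) choice_weight c = 1.
Proof.
elim: m => [|m IHm]; first by rewrite /= big_seq1 /choice_weight big_nil.
rewrite big_bool_seqsS -[RHS]IHm; apply: eq_bigr => c _.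
by rewrite /choice_weight !big_cons -mulrDl addrC subrK mul1r.
Qed.

Lemma sum_choice_weight_nth m k : (k < m)%N ->
  \sum_(c <- bool_seqs m) choice_weight c * (nth false c k)%:R = gamma.
Proof.
elim: m k => [//|m IHm] [|k] ltkm; rewrite big_bool_seqsS.
  under eq_bigr => c _ do rewrite /choice_weight !big_cons /= mulr1 mulr0 addr0.
  by rewrite -mulr_sumr sum_choice_weight mulr1.
rewrite -[RHS](IHm k ltkm); apply: eq_bigr => c _.
by rewrite /choice_weight !big_cons /= -!mulrA -mulrDl addrC subrK mul1r.
Qed.

Definition uncle_prob (s k : nat) : R :=
  if (s - k <= n1)%N then (if k == 0%N then 1 else gamma) else 0.

Lemma Ecyc_attacker_wins x :
  x != [:: false] -> x != [:: true; false; false] ->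
  (forall i, (i < size x)%N -> ~~ nth false x i -> (nH_before x i < nS_before x i)%N) ->
  Ecyc gamma n1 x = \sum_(i <- iota 0 (size x))
     (if nth false x i then 0 else uncle_prob (nS_before x i) (nH_before x i)).
Proof.
move=> x_neq_H x_neq_SHH ahead.
rewrite /Ecyc (@sum_tuple_bool_seqs _ _ (fun c => choice_weight c * (Uc n1 (cycle_blocks x c))%:R)).
have Uc_sum c : (Uc n1 (cycle_blocks x c))%:R = \sum_(i <- iota 0 (size x))
    ([&& ~~ nth false x i, (nS_before x i - nH_before x i <= n1)%N &
         (nH_before x i == 0)%N || nth false c (nH_before x i)] : nat)%:R :> R.
  rewrite /Uc size_cycle_blocks // -natr_count; congr (_%:R); apply: eq_in_count => i.
  by rewrite mem_iota add0n => /andP[_]; exact: uncle_referredE.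
under eq_bigr do rewrite Uc_sum mulr_sumr.
rewrite exchange_big /=; apply: eq_big_seq => i; rewrite mem_iota add0n => /andP[_ ltix].
case xi: (nth false x i) => /=; first by rewrite big1 // => c _; rewrite mulr0.
rewrite /uncle_prob; case: (_ <= n1)%N => /=; last by rewrite big1 // => c _; rewrite mulr0.
case: eqP => _ /=; first by under eq_bigr do rewrite mulr1; rewrite sum_choice_weight.
apply: sum_choice_weight_nth.
by have := nH_before_le x i.+1; rewrite nH_beforeS // xi addn1.
Qed.

End ChoiceAverage.

Section LatticePaths.
Context {R : realType} (p q gamma : R) (n1 : nat).

Definition path_weight (u : seq bool) : R := \prod_(b <- u) (if b then q else p).

Fixpoint path_uncles (s k : nat) (u : seq bool) : R :=
  if u is b :: u' then
    (if b then path_uncles s.+1 k u' else uncle_prob gamma n1 s k + path_uncles s k.+1 u')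
  else 0.

Lemma path_unclesE s k u : path_uncles s k u = \sum_(i <- iota 0 (size u))
  (if nth false u i then 0 else uncle_prob gamma n1 (s + nS_before u i) (k + nH_before u i)).
Proof.
elim: u s k => [|b u IHu] s k /=; first by rewrite big_nil.
rewrite big_cons -(addn0 1%N) iotaDl big_map /nS_before /nH_before /= !addn0.
by case: b; rewrite IHu ?add0r; [|congr (_ + _)];
  apply: eq_bigr => j _; rewrite ?add0n ?add1n ?addSn ?addnS.
Qed.

Definition passage_uncles (m s k : nat) : R :=
  \sum_(u <- bool_seqs m) (first_passage s k u)%:R * path_weight u * path_uncles s k u.

Definition passage_prob (m s k : nat) : R :=
  \sum_(u <- bool_seqs m) (first_passage s k u)%:R * path_weight u.

Lemma passage_uncles0 s k : passage_uncles 0 s k = 0.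
Proof. by rewrite /passage_uncles big_seq1 mulr0. Qed.

Lemma passage_prob0 s k : passage_prob 0 s k = (s == k.+1)%:R.
Proof. by rewrite /passage_prob big_seq1 /path_weight big_nil mulr1. Qed.

Lemma passage_unclesS m s k : passage_uncles m.+1 s k = (k.+2 <= s)%N%:R *
  (q * passage_uncles m s.+1 k +
   p * (uncle_prob gamma n1 s k * passage_prob m s k.+1 + passage_uncles m s k.+1)).
Proof.
rewrite /passage_uncles /passage_prob !mulr_sumr -big_split !mulr_sumr -big_split.
rewrite mulr_sumr big_bool_seqsS; apply: eq_bigr => u _; rewrite /path_weight !big_cons /=.
by case: (k.+2 <= s)%N; rewrite /= ?mul0r ?mul1r ?addr0 //; ring.
Qed.

Lemma passage_probS m s k : passage_prob m.+1 s k =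
  (k.+2 <= s)%N%:R * (q * passage_prob m s.+1 k + p * passage_prob m s k.+1).
Proof.
rewrite /passage_prob !mulr_sumr -big_split mulr_sumr big_bool_seqsS.
apply: eq_bigr => u _; rewrite /path_weight !big_cons /=.
by case: (k.+2 <= s)%N; rewrite /= ?mul0r ?mul1r ?addr0 //; ring.
Qed.

Definition cum_uncles (M s k : nat) : R := \sum_(m < M) passage_uncles m s k.
Definition cum_prob (M s k : nat) : R := \sum_(m < M) passage_prob m s k.

Lemma cum_unclesS M s k : cum_uncles M.+1 s k = (k.+2 <= s)%N%:R *
  (q * cum_uncles M s.+1 k +
   p * (uncle_prob gamma n1 s k * cum_prob M s k.+1 + cum_uncles M s k.+1)).
Proof.
rewrite /cum_uncles /cum_prob big_ord_recl passage_uncles0 add0r.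
under eq_bigr do rewrite passage_unclesS.
by rewrite -mulr_sumr big_split -!mulr_sumr big_split -!mulr_sumr.
Qed.

Lemma cum_probS M s k : cum_prob M.+1 s k = (s == k.+1)%:R +
  (k.+2 <= s)%N%:R * (q * cum_prob M s.+1 k + p * cum_prob M s k.+1).
Proof.
rewrite /cum_prob big_ord_recl passage_prob0.
under eq_bigr do rewrite passage_probS.
by rewrite -mulr_sumr big_split -!mulr_sumr.
Qed.

End LatticePaths.

Section LimitUncles.
Context {R : realType} (p q gamma : R) (n1 : nat).
Hypotheses (hpq : p + q = 1) (hq0 : 0 < q) (hqp : q < p) (hn1 : (2 <= n1)%N).

Let hp0 : 0 < p := lt_trans hq0 hqp.
Let pE : p = 1 - q. Proof. by rewrite -hpq addrK. Qed.
Let q_neq0 : q != 0. Proof. by rewrite gt_eqF. Qed.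
Let pq_neq0 : p - q != 0. Proof. by rewrite subr_eq0 gt_eqF. Qed.

(* Consider the walk on depths d = s - k that goes up with probability q and
   down with probability p.  Started at depth L >= 1, [low_downs L] is the
   expected number of down-steps made from a depth at most n1 before the walk
   first reaches depth 1, and [first_down_low L] is the probability that its
   first down-step is made from a depth at most n1. *)
Definition pq_ratio : R := p / q.
Definition slope : R := p / (p - q).
Definition bdry : R := - q ^+ 2 / ((p - q) ^+ 2 * pq_ratio ^+ n1.-1).
Definition low_downs_at (j : nat) : R := slope * (j%:R - 1) + bdry * (pq_ratio ^+ j - pq_ratio).
Definition low_downs (L : nat) : R := low_downs_at (minn L n1).
Definition first_down_low (L : nat) : R :=
  if (2 <= L <= n1)%N then 1 - q ^+ (n1 - L).+1 else 0.

Definition limit_uncles (s k : nat) : R := gamma * low_downs (s - k) +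
  (if k == 0%N then (1 - gamma) * first_down_low (s - k) else 0).

Lemma pq_ratio_gt0 : 0 < pq_ratio. Proof. by rewrite divr_gt0. Qed.
Lemma pq_ratio_ge1 : 1 <= pq_ratio. Proof. by rewrite ler_pdivlMr // mul1r ltW. Qed.
Lemma slope_gt0 : 0 < slope. Proof. by rewrite divr_gt0 // subr_gt0. Qed.

Lemma low_downs_rec L : (2 <= L)%N ->
  low_downs L = q * low_downs L.+1 + p * ((L <= n1)%N%:R + low_downs L.-1).
Proof.
move=> le2L; rewrite /low_downs.
case: (ltngtP L n1) => [ltLn | ltnL | eqLn].
- rewrite (minn_idPl ltLn) (minn_idPl (leq_trans (leq_pred L) (ltnW ltLn))).
  case: L le2L ltLn => [|[|l]] // _ _ /=.
  by rewrite /low_downs_at -!natr1 !exprS /slope /pq_ratio pE; field; rewrite -pE q_neq0.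
- rewrite (minn_idPr (ltnW (ltn_trans ltnL (ltnSn _)))).
  rewrite (minn_idPr (_ : n1 <= L.-1)%N); last by case: L le2L ltnL.
  by rewrite add0r -mulrDl addrC hpq mul1r.
- rewrite /low_downs_at /bdry -eqLn (minn_idPr (leqnSn _)) (minn_idPl (leq_pred _)).
  case: L le2L {eqLn} => [|m] // _ /=.
  rewrite -!natr1 (exprS pq_ratio m).
  have : pq_ratio ^+ m != 0 by rewrite expf_neq0 // gt_eqF // pq_ratio_gt0.
  move: (pq_ratio ^+ m) => X X_neq0.
  by rewrite /slope /pq_ratio pE; field; rewrite -pE q_neq0 pq_neq0 X_neq0.
Qed.

Lemma first_down_low_rec L : (2 <= L)%N ->
  first_down_low L = q * first_down_low L.+1 + p * (L <= n1)%N%:R.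
Proof.
move=> le2L; rewrite /first_down_low; case: (ltngtP L n1) => [ltLn | ltnL | <-].
- by rewrite le2L ltnS (ltnW le2L) -(subnSK ltLn) pE exprS /=; ring.
- by rewrite !andbF !mulr0 addr0.
- by rewrite le2L andbF subnn expr1 mulr0 mulr1 add0r pE.
Qed.

Lemma limit_uncles_rec s k : (k.+2 <= s)%N ->
  limit_uncles s k = q * limit_uncles s.+1 k + p * (uncle_prob gamma n1 s k + limit_uncles s k.+1).
Proof.
move=> le_ks; rewrite /limit_uncles /uncle_prob.
have -> : (s.+1 - k = (s - k).+1)%N by lia.
have -> : (s - k.+1 = (s - k).-1)%N by lia.
have le2L : (2 <= s - k)%N by lia.
rewrite (low_downs_rec _ le2L) (first_down_low_rec _ le2L).
by case: (s - k <= n1)%N; case: eqP => _ /=; ring.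
Qed.

Lemma limit_uncles_diag k : limit_uncles k.+1 k = 0.
Proof.
rewrite /limit_uncles /low_downs /first_down_low subSnn.
rewrite (minn_idPl (leq_trans (isT : (1 <= 2)%N) hn1)) /low_downs_at /=.
by rewrite !subrr !mulr0 addr0 mulr0 add0r; case: eqP; rewrite ?mulr0.
Qed.

Lemma low_downs_bound L :
  `|low_downs L| <= slope * (n1%:R + 1) + `|bdry| * (pq_ratio ^+ n1 + pq_ratio).
Proof.
rewrite /low_downs /low_downs_at; have le_jn := geq_minr L n1; move: (minn L n1) le_jn => j le_jn.
apply: (le_trans (ler_normD _ _)); apply: lerD.
  rewrite normrM gtr0_norm ?slope_gt0 // ler_wpM2l ?(ltW slope_gt0) //.
  by apply: (le_trans (ler_normB _ _)); rewrite normr1 ger0_norm // lerD2r ler_nat.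
rewrite normrM ler_wpM2l //; apply: (le_trans (ler_normB _ _)).
rewrite !ger0_norm ?exprn_ge0 ?(ltW pq_ratio_gt0) // lerD2r.
exact: (ler_weXn2l pq_ratio_ge1).
Qed.

Lemma first_down_low_bound L : `|first_down_low L| <= 1.
Proof.
rewrite /first_down_low; case: ifP => _; last by rewrite normr0.
have q_le1 : q <= 1 by rewrite -hpq lerDr ltW.
rewrite ger0_norm ?subr_ge0 ?exprn_ile1 ?(ltW hq0) //.
by rewrite lerBlDr lerDl exprn_ge0 ?(ltW hq0).
Qed.

Definition uncles_bound : R :=
  slope * (n1%:R + 1) + `|bdry| * (pq_ratio ^+ n1 + pq_ratio) + 1.

Lemma limit_uncles_bound s k : 0 <= gamma -> gamma <= 1 ->
  `|limit_uncles s k| <= uncles_bound.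
Proof.
move=> hg0 hg1; rewrite /limit_uncles /uncles_bound.
apply: (le_trans (ler_normD _ _)); apply: lerD.
  by rewrite normrM ger0_norm //; apply: le_trans (low_downs_bound (s - k)); rewrite ler_piMl.
case: eqP => _; last by rewrite normr0.
rewrite normrM ger0_norm ?subr_ge0 //; apply: le_trans (first_down_low_bound (s - k)).
by rewrite ler_piMl // lerBlDr lerDl.
Qed.

End LimitUncles.

Section ErrorBound.
Context {R : realType} (p q gamma : R) (n1 : nat).
Hypotheses (hpq : p + q = 1) (hq0 : 0 < q) (hqp : q < p).
Hypotheses (hg0 : 0 <= gamma) (hg1 : gamma <= 1) (hn1 : (2 <= n1)%N).

Let hp0 : 0 < p := lt_trans hq0 hqp.

Definition lam : R := (2 * q)^-1.
Definition contr : R := q * lam + p / lam.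
Definition rate : R := (1 + contr) / 2.
Definition err_const : R := uncles_bound p q n1 + p / (rate - contr).

Lemma lam_gt0 : 0 < lam. Proof. by rewrite invr_gt0 mulr_gt0. Qed.
Lemma lam_ge1 : 1 <= lam.
Proof. by rewrite invf_ge1 ?mulr_gt0 // mulr_natl mulr2n -[leRHS]hpq lerD2r ltW. Qed.
Lemma contrE : contr = 1 / 2 + 2 * p * q.
Proof. by rewrite /contr /lam; field; rewrite gt_eqF. Qed.
Lemma contr_ge0 : 0 <= contr.
Proof. by rewrite contrE addr_ge0 ?mulr_ge0 ?divr_ge0 // ltW. Qed.
Lemma contr_lt1 : contr < 1.
Proof. by rewrite contrE; move: hpq hqp; nra. Qed. (* nra ignores section hypotheses *)
Lemma contr_lt_rate : contr < rate. Proof. by have := contr_lt1; rewrite /rate; lra. Qed.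
Lemma rate_lt1 : rate < 1. Proof. by have := contr_lt1; rewrite /rate; lra. Qed.
Lemma rate_ge0 : 0 <= rate. Proof. by have := contr_ge0; rewrite /rate; lra. Qed.

Lemma uncles_bound_ge0 : 0 <= uncles_bound p q n1.
Proof. exact: le_trans (normr_ge0 _) (limit_uncles_bound _ _ _ n1 hpq hq0 hqp 0 0 hg0 hg1). Qed.

Lemma err_const_ge0 : 0 <= err_const.
Proof.
by rewrite addr_ge0 ?uncles_bound_ge0 // divr_ge0 ?(ltW hp0) // subr_ge0 ltW // contr_lt_rate.
Qed.

Lemma err_const_gap : p <= err_const * (rate - contr).
Proof.
rewrite mulrDl divfK ?gt_eqF ?subr_gt0 ?contr_lt_rate // lerDr.
by rewrite mulr_ge0 ?uncles_bound_ge0 // subr_ge0 ltW // contr_lt_rate.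
Qed.

Lemma cum_prob_defect M s k : (k < s)%N ->
  0 <= 1 - cum_prob p q M s k <= contr ^+ M * lam ^+ (s - k).
Proof.
elim: M s k => [|M IHM] s k ltks.
  by rewrite /cum_prob big_ord0 subr0 expr0 mul1r ler01 exprn_ege1 // lam_ge1.
rewrite cum_probS; case: (ltnP k.+1 s) => [ltk1s | les]; last first.
  have -> : s = k.+1 by lia.
  by rewrite eqxx mul0r addr0 subrr lexx mulr_ge0 // exprn_ge0 ?contr_ge0 ?(ltW lam_gt0).
rewrite gtn_eqF // mul1r add0r.
have /andP[A0 A1] := IHM s.+1 k (ltnW (ltnW ltk1s)).
have /andP[B0 B1] := IHM s k.+1 ltk1s.
have -> : 1 - (q * cum_prob p q M s.+1 k + p * cum_prob p q M s k.+1) =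
  q * (1 - cum_prob p q M s.+1 k) + p * (1 - cum_prob p q M s k.+1).
  by rewrite -[1 in LHS]hpq; ring.
rewrite addr_ge0 ?mulr_ge0 ?(ltW hq0) ?(ltW hp0) //=.
apply: le_trans (lerD (ler_wpM2l (ltW hq0) A1) (ler_wpM2l (ltW hp0) B1)) _.
have [l lE] : exists l, (s - k = l.+2)%N by exists (s - k - 2)%N; lia.
have -> : (s.+1 - k = l.+3)%N by lia.
have -> : (s - k.+1 = l.+1)%N by lia.
rewrite lE !exprS /contr le_eqVlt; apply/orP; left; apply/eqP.
by field; rewrite gt_eqF // lam_gt0.
Qed.

Lemma uncle_prob_le1 s k : `|uncle_prob gamma n1 s k| <= 1.
Proof.
rewrite /uncle_prob; case: (_ <= n1)%N; last by rewrite normr0.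
by case: eqP => _; rewrite ?normr1 // ger0_norm.
Qed.

Lemma err_step M l :
  q * (err_const * rate ^+ M * lam ^+ l.+3) +
  p * (contr ^+ M * lam ^+ l.+1 + err_const * rate ^+ M * lam ^+ l.+1) <=
  err_const * rate ^+ M.+1 * lam ^+ l.+2.
Proof.
have lam_neq0 : lam != 0 by rewrite gt_eqF // lam_gt0.
have contr_rate : contr ^+ M <= rate ^+ M.
  by rewrite lerXn2r ?nnegrE ?contr_ge0 ?rate_ge0 // ltW // contr_lt_rate.
apply: (@le_trans _ _ (q * (err_const * rate ^+ M * lam ^+ l.+3) +
  p * (rate ^+ M * lam ^+ l.+1 + err_const * rate ^+ M * lam ^+ l.+1))).
  by rewrite lerD2l ler_wpM2l ?(ltW hp0) // lerD2r ler_wpM2r // exprn_ge0 // ltW // lam_gt0.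
rewrite -subr_le0.
have -> : q * (err_const * rate ^+ M * lam ^+ l.+3) +
    p * (rate ^+ M * lam ^+ l.+1 + err_const * rate ^+ M * lam ^+ l.+1) -
    err_const * rate ^+ M.+1 * lam ^+ l.+2 =
    rate ^+ M * lam ^+ l.+1 * (p - err_const * lam * (rate - contr)).
  by rewrite /contr !exprS; field.
rewrite mulr_ge0_le0 ?mulr_ge0 ?exprn_ge0 ?rate_ge0 ?(ltW lam_gt0) // subr_le0.
apply: le_trans err_const_gap _; rewrite -mulrA ler_wpM2l ?err_const_ge0 //.
by rewrite ler_peMl ?lam_ge1 // subr_ge0 ltW // contr_lt_rate.
Qed.

Lemma cum_uncles_error M s k : (k < s)%N ->
  `|limit_uncles p q gamma n1 s k - cum_uncles p q gamma n1 M s k|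
    <= err_const * rate ^+ M * lam ^+ (s - k).
Proof.
elim: M s k => [|M IHM] s k ltks.
  rewrite /cum_uncles big_ord0 subr0 expr0 mulr1.
  apply: le_trans (limit_uncles_bound _ _ _ _ hpq hq0 hqp s k hg0 hg1) _.
  apply: (@le_trans _ _ err_const).
    by rewrite lerDl divr_ge0 ?(ltW hp0) // subr_ge0 ltW // contr_lt_rate.
  by rewrite ler_peMr ?err_const_ge0 // exprn_ege1 // lam_ge1.
rewrite cum_unclesS; case: (ltnP k.+1 s) => [ltk1s | les]; last first.
  have -> : s = k.+1 by lia.
  rewrite /= mulr0n mul0r limit_uncles_diag // subr0 normr0.
  by rewrite !mulr_ge0 ?err_const_ge0 ?exprn_ge0 ?rate_ge0 // ltW // lam_gt0.
rewrite /= mulr1n mul1r limit_uncles_rec //.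
set F := uncle_prob gamma n1 s k.
set Pk := cum_prob p q M s k.+1.
set L1 := limit_uncles _ _ _ _ s.+1 k; set L2 := limit_uncles _ _ _ _ s k.+1.
set Z1 := cum_uncles _ _ _ _ M s.+1 k; set Z2 := cum_uncles _ _ _ _ M s k.+1.
have -> : q * L1 + p * (F + L2) - (q * Z1 + p * (F * Pk + Z2)) =
    q * (L1 - Z1) + p * (F * (1 - Pk) + (L2 - Z2)) by ring.
have /andP[P0 P1] := cum_prob_defect M _ _ ltk1s.
have IH1 := IHM s.+1 k (ltnW (ltnW ltk1s)).
have IH2 := IHM s k.+1 ltk1s.
have [l lE] : exists l, (s - k = l.+2)%N by exists (s - k - 2)%N; lia.
rewrite (_ : s.+1 - k = l.+3)%N in IH1; last by lia.
rewrite (_ : s - k.+1 = l.+1)%N in IH2 P1; last by lia.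
have F_err : `|F * (1 - Pk)| <= contr ^+ M * lam ^+ l.+1.
  by rewrite normrM (ger0_norm P0); apply: le_trans P1; rewrite ler_piMl ?uncle_prob_le1.
apply: le_trans (ler_normD _ _) _; rewrite lE.
rewrite !normrM (ger0_norm (ltW hq0)) (ger0_norm (ltW hp0)).
apply: le_trans (err_step M l); apply: lerD; first by rewrite ler_wpM2l ?(ltW hq0).
rewrite ler_wpM2l ?(ltW hp0) //.
by apply: le_trans (ler_normD _ _) _; apply: lerD.
Qed.

End ErrorBound.

Section Cycles.
Context {R : realType} (p q gamma : R) (n1 : nat).
Hypothesis hn1 : (2 <= n1)%N.

Lemma Ecyc_H : Ecyc gamma n1 [:: false] = 0.
Proof. by rewrite /Ecyc big1 // => c _; rewrite /Uc /= mulr0. Qed.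

Lemma Ecyc_SHS : Ecyc gamma n1 [:: true; false; true] = 1.
Proof.
rewrite Ecyc_attacker_wins //; last by case=> [|[|[|i]]].
rewrite /= !big_cons big_nil /uncle_prob /nS_before /nH_before /=.
by rewrite ltnW // !(add0r, addr0).
Qed.

Lemma Ecyc_SHH : Ecyc gamma n1 [:: true; false; false] = 1.
Proof.
have Uc_SHH c : Uc n1 (cycle_blocks [:: true; false; false] c) = 1%N.
  case: n1 hn1 => [|[|m]] // _.
  by rewrite /cycle_blocks /=; case: (nth false c 1); rewrite /Uc /is_uncle /referred /tip /=.
rewrite /Ecyc; under eq_bigr do rewrite Uc_SHH mulr1.
by rewrite (@sum_tuple_bool_seqs _ _ (choice_weight gamma)) sum_choice_weight.
Qed.

Lemma Ecyc_SS u : first_passage 2 0 u ->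
  Ecyc gamma n1 (true :: true :: u) = path_uncles gamma n1 2 0 u.
Proof.
rewrite first_passageE => /andP[/allP ahead _].
rewrite Ecyc_attacker_wins //; last first.
  case=> [|[|j]] // ltj _; move: (ahead j).
  by rewrite mem_iota add0n !nH_before_cons !nS_before_cons => /(_ ltj); lia.
by rewrite -[RHS]/(path_uncles gamma n1 0 0 (true :: true :: u)) path_unclesE.
Qed.

Lemma path_weightE u : path_weight p q u = q ^+ count id u * p ^+ count negb u.
Proof.
elim: u => [|b u IHu]; first by rewrite /path_weight big_nil mulr1.
by rewrite /path_weight big_cons -/(path_weight p q u) IHu; case: b; rewrite /= exprS; ring.
Qed.

Lemma passage_uncles_even n : passage_uncles p q gamma n1 (2 * n) 2 0 = 0.
Proof.
rewrite /passage_uncles big_seq big1 // => u; rewrite mem_bool_seqs => /eqP size_u.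
have := count_id_negb u; rewrite first_passageE size_u => cnt.
by rewrite (_ : (2 + _ == _)%N = false) ?andbF ?mul0r //; apply/eqP; lia.
Qed.

Lemma sum_SSwH_cycles n :
  \sum_(w : (2 * n).-tuple bool | dyck w)
     q ^+ 2 * p * (p * q) ^+ n * Ecyc gamma n1 (true :: true :: rcons w false)
  = q ^+ 2 * passage_uncles p q gamma n1 (2 * n).+1 2 0.
Proof.
rewrite big_mkcond /= (@sum_tuple_bool_seqs _ _ (fun w => if dyck w then
   q ^+ 2 * p * (p * q) ^+ n * Ecyc gamma n1 (true :: true :: rcons w false) else 0)).
rewrite /passage_uncles big_bool_seqs_rcons mulr_sumr big_seq [RHS]big_seq.
apply: eq_bigr => w; rewrite mem_bool_seqs => /eqP size_w.
rewrite !first_passage_rcons /= mul0r mul0r add0r.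
case dyck_w: (dyck w); last by rewrite !mul0r mulr0.
have [cntS cntH] : count id w = n /\ count negb w = n.
  by move: dyck_w (count_id_negb w); rewrite dyckE size_w => /andP[_ /eqP]; lia.
rewrite Ecyc_SS ?first_passage_rcons // mul1r path_weightE -cats1 !count_cat cntS cntH /=.
by rewrite !addn0 addn1 exprMn !exprS; ring.
Qed.

Lemma cum_uncles_even N :
  cum_uncles p q gamma n1 (2 * N) 2 0 = \sum_(n < N) passage_uncles p q gamma n1 (2 * n).+1 2 0.
Proof.
elim: N => [|N IHN]; first by rewrite muln0 /cum_uncles !big_ord0.
rewrite big_ord_recr -IHN /cum_uncles (_ : 2 * N.+1 = (2 * N).+2)%N; last by lia.
by rewrite !big_ord_recr /= passage_uncles_even addr0.
Qed.

Lemma EU_partialE N : EU_partial p q gamma n1 N =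
  p * q ^+ 2 + p ^+ 2 * q + q ^+ 2 * cum_uncles p q gamma n1 (2 * N) 2 0.
Proof.
rewrite /EU_partial Ecyc_H Ecyc_SHS Ecyc_SHH cum_uncles_even mulr_sumr mulr0 add0r !mulr1.
by congr (_ + _); apply: eq_bigr => n _; exact: sum_SSwH_cycles.
Qed.

End Cycles.

Local Open Scope classical_set_scope.
Local Open Scope ring_scope.

Lemma cvg_geometric_error {R : realType} {u : nat -> R} {l a z : R} :
  (forall N, `|l - u N| <= a * z ^+ N) -> `|z| < 1 -> u @ \oo --> l.
Proof.
move=> err z_lt1; have az0 := cvg_geometric a z_lt1.
apply: (@squeeze_cvgr _ _ _ _ (fun N => l - a * z ^+ N) (fun N => l + a * z ^+ N)).
- by apply: nearW => N; rewrite -ler_distlC err.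
- by rewrite -[X in _ --> X]subr0; apply: cvgB => //; exact: cvg_cst.
- by rewrite -[X in _ --> X]addr0; apply: cvgD => //; exact: cvg_cst.
Qed.

Lemma limit_unclesE (R : realType) (p q gamma : R) (n1 : nat) :
  p + q = 1 -> 0 < q -> q < p -> (2 <= n1)%N ->
  q + q ^+ 3 * gamma / (p - q) - p ^+ 3 / (p - q) * (q / p) ^+ n1.+1 * gamma
    - q ^+ n1.+1 * (1 - gamma) =
  p * q ^+ 2 + p ^+ 2 * q + q ^+ 2 * limit_uncles p q gamma n1 2 0.
Proof.
move=> hpq hq0 hqp hn1.
rewrite /limit_uncles /low_downs /first_down_low /low_downs_at /bdry /slope /pq_ratio /=.
rewrite (minn_idPl hn1) hn1 /=.
case: n1 hn1 => [|[|m]] // _; rewrite (_ : m.+2 - (2 - 0) = m)%N /=; last by lia.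
have p_neq0 : p != 0 by rewrite gt_eqF // (lt_trans hq0).
have q_neq0 : q != 0 by rewrite gt_eqF.
have pq_neq0 : p - q != 0 by rewrite subr_eq0 gt_eqF.
have pm_neq0 : p ^+ m != 0 by rewrite expf_neq0.
have qm_neq0 : q ^+ m != 0 by rewrite expf_neq0.
rewrite !expr_div_n !exprS; move: pm_neq0 qm_neq0.
move: (p ^+ m) (q ^+ m) => P Q P_neq0 Q_neq0.
have pE : p = 1 - q by rewrite -hpq addrK.
rewrite pE in p_neq0 pq_neq0 *.
by field; rewrite q_neq0 pq_neq0 p_neq0 P_neq0 Q_neq0.
Qed.

Lemma EU_partial_error (R : realType) (p q gamma : R) (n1 : nat)
  (hpq : p + q = 1) (hq0 : 0 < q) (hqp : q < p)
  (hg0 : 0 <= gamma) (hg1 : gamma <= 1) (hn1 : (2 <= n1)%N) N :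
  `|(p * q ^+ 2 + p ^+ 2 * q + q ^+ 2 * limit_uncles p q gamma n1 2 0) - EU_partial p q gamma n1 N|
    <= q ^+ 2 * err_const p q n1 * lam q ^+ 2 * (rate p q ^+ 2) ^+ N.
Proof.
rewrite EU_partialE // opprD addrACA subrr add0r -mulrBr normrM ger0_norm ?exprn_ge0 ?(ltW hq0) //.
rewrite -2!mulrA ler_wpM2l ?exprn_ge0 ?(ltW hq0) //.
have := cum_uncles_error p q gamma n1 hpq hq0 hqp hg0 hg1 hn1 (2 * N) 2 0 isT.
by rewrite subn0 exprM mulrAC -mulrA.
Qed.

Theorem proposition7 (R : realType) (p q gamma : R) (n1 : nat)
  (hpq : p + q = 1) (hq0 : 0 < q) (hqp : q < p)
  (hg0 : 0 <= gamma) (hg1 : gamma <= 1) (hn1 : (2 <= n1)%N) :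
  (EU_partial p q gamma n1 : nat -> R) @ \oo -->
    q + q ^+ 3 * gamma / (p - q)
      - p ^+ 3 / (p - q) * (q / p) ^+ n1.+1 * gamma
      - q ^+ n1.+1 * (1 - gamma).
Proof.
have rate2_lt1 : `|rate p q ^+ 2| < 1.
  have rate_ge0 := rate_ge0 p q hq0 hqp.
  by rewrite ger0_norm ?exprn_ge0 // expr2 mulr_ilt1 ?rate_lt1.
rewrite limit_unclesE //.
exact: cvg_geometric_error (EU_partial_error R p q gamma n1 hpq hq0 hqp hg0 hg1 hn1) rate2_lt1.
Qed.
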